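(* Let $\mathcal{A}=\{A,T,C,G\}$ with $p_A=p_T>0$ and $p_C=p_G>0$, let $S$ be a scoring function on $\mathcal{A}^*$, and let $T^{DNA}=T_X+T_Y$ be as defined in the context. If there exists $\epsilon>0$ such that $\lambda(S)-\lambda(S-\epsilon T^{DNA})>0$, then $\mathrm{VAR}[L_n(S)]=\Theta(n)$.
   Context: Let $\mathcal{A}=\{A,T,C,G\}$ and $\mathcal{A}^*=\mathcal{A}\cup\{g\}$ where $g$ is a gap symbol. A scoring function is a symmetric map $S:\mathcal{A}^*\times\mathcal{A}^*\to\mathbb{R}$. For strings $x=x_1\dots x_m$, $y=y_1\dots y_{m'}$ over $\mathcal{A}$, an alignment $\pi$ is a sequence $((\mu_1,\nu_1),\dots,(\mu_k,\nu_k))$, $k\ge0$, with $1\le\mu_1<\dots<\mu_k\le m$ and $1\le\nu_1<\dots<\nu_k\le m'$; its score is $S_\pi(x,y)=\sum_{i=1}^k S(x_{\mu_i},y_{\nu_i})+\sum_{j\notin\{\mu_i\}}S(x_j,g)+\sum_{j\notin\{\nu_i\}}S(g,y_j)$, and $L_S(x,y)=\max_\pi S_\pi(x,y)$. Let $X=X_1\dots X_n$, $Y=Y_1\dots Y_n$ where all $2n$ letters are i.i.d. with $P(X_i=c)=P(Y_j=c)=p_c$. Put $L_n(S)=L_S(X,Y)$, $\lambda_n(S)=E[L_n(S)]/n$, $\lambda(S)=\lim_n\lambda_n(S)$. Define $T_X(U,V)=\tfrac12(S(A,V)-S(U,V))+\tfrac12(S(T,V)-S(U,V))$ for $U\in\{C,G\}$,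 $V\in\mathcal{A}^*$, and $T_X(U,V)=0$ for $U\notin\{C,G\}$; define $T_Y(V,U)=\tfrac12(S(V,A)-S(V,U))+\tfrac12(S(V,T)-S(V,U))$ for $U\in\{C,G\}$, $V\in\mathcal{A}^*$, and $T_Y(V,U)=0$ for $U\notin\{C,G\}$; $T^{DNA}=T_X+T_Y$ and $S-\epsilon T^{DNA}$ is the pointwise combination. (Here $T$ in $T_X$'s formula denotes the letter $T$.) *)

From Stdlib Require Import Reals List Arith.
Import ListNotations.
Open Scope R_scope.

Inductive letter : Type := lA | lT | lC | lG.

(* A^* = A ∪ {g}: [None] is the gap symbol g. *)
Definition gletter := option letter.
Definition gap : gletter := None.

Definition scoring := gletter -> gletter -> R.

Definition symmetric_scoring (S : scoring) : Prop := forall u v, S u v = S v u.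

(* 1-based access to a word *)
Definition at1 (x : list letter) (i : nat) : gletter := Some (nth (i - 1) x lA).

(* An alignment is a list of index pairs (mu_i, nu_i), 1-based. *)
Fixpoint strictly_incr (l : list (nat * nat)) : bool :=
  match l with
  | [] => true
  | p :: l' =>
      match l' with
      | [] => true
      | q :: _ => (Nat.ltb (fst p) (fst q) && Nat.ltb (snd p) (snd q) && strictly_incr l')%bool
      end
  end.

Fixpoint sublists {A : Type} (l : list A) : list (list A) :=
  match l with
  | [] => [[]]
  | a :: l' => let r := sublists l' in map (cons a) r ++ r
  end.

Definition is_alignment (m m' : nat) (pi : list (nat * nat)) : Prop :=
  strictly_incr pi = true /\
  Forall (fun p => (1 <= fst p <= m)%nat /\ (1 <= snd p <= m')%nat) pi.

(* All alignments of words of lengths m, m': the strictly increasing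
   sub-sequences of the lexicographically ordered grid [1..m]x[1..m']. *)
Definition alignments (m m' : nat) : list (list (nat * nat)) :=
  filter strictly_incr (sublists (list_prod (seq 1 m) (seq 1 m'))).

Definition Rsum (l : list R) : R := fold_right Rplus 0 l.

Definition align_score (S : scoring) (x y : list letter) (pi : list (nat * nat)) : R :=
  Rsum (map (fun p => S (at1 x (fst p)) (at1 y (snd p))) pi)
  + Rsum (map (fun j => S (at1 x j) gap)
              (filter (fun j => negb (existsb (Nat.eqb j) (map fst pi))) (seq 1 (length x))))
  + Rsum (map (fun j => S gap (at1 y j))
              (filter (fun j => negb (existsb (Nat.eqb j) (map snd pi))) (seq 1 (length y)))).

Definition L_S (S : scoring) (x y : list letter) : R :=
  fold_right Rmax (align_score S x y [])
    (map (align_score S x y) (alignments (length x) (length y))).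

Fixpoint words (n : nat) : list (list letter) :=
  match n with
  | O => [[]]
  | S k => flat_map (fun w => map (fun c => c :: w) [lA; lT; lC; lG]) (words k)
  end.

Definition word_prob (p : letter -> R) (w : list letter) : R :=
  fold_right Rmult 1 (map p w).

(* Expectation of f(X,Y), X,Y independent i.i.d. words of length n with letter law p *)
Definition Expect (p : letter -> R) (n : nat) (f : list letter -> list letter -> R) : R :=
  Rsum (flat_map (fun x => map (fun y => word_prob p x * word_prob p y * f x y) (words n))
                 (words n)).

Definition E_Ln (p : letter -> R) (S : scoring) (n : nat) : R :=
  Expect p n (fun x y => L_S S x y).

Definition Var_Ln (p : letter -> R) (S : scoring) (n : nat) : R :=
  Expect p n (fun x y => (L_S S x y) ^ 2) - (E_Ln p S n) ^ 2.

Definition lambda_n (p : letter -> R) (S : scoring) (n : nat) : R :=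
  E_Ln p S n / INR n.

Definition lambda_is (p : letter -> R) (S : scoring) (l : R) : Prop :=
  Un_cv (lambda_n p S) l.

Definition isCG (u : gletter) : bool :=
  match u with Some lC | Some lG => true | _ => false end.

Definition T_X (S : scoring) (u v : gletter) : R :=
  if isCG u then /2 * (S (Some lA) v - S u v) + /2 * (S (Some lT) v - S u v) else 0.

Definition T_Y (S : scoring) (v u : gletter) : R :=
  if isCG u then /2 * (S v (Some lA) - S v u) + /2 * (S v (Some lT) - S v u) else 0.

Definition T_DNA (S : scoring) : scoring := fun u v => T_X S u v + T_Y S u v.

Definition perturb (S : scoring) (eps : R) : scoring := fun u v => S u v - eps * T_DNA S u v.

From Stdlib Require Import Reals Lra Psatz Lia List Arith.
Import ListNotations.
Open Scope R_scope.

(** Upper bound: changing one letter of [X] or [Y] moves [L_n(S)] by a bounded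
    amount, so the Efron--Stein inequality gives [Var L_n(S) <= C n].

    Lower bound: let [V] be the centred number of C/G letters in [X] and [Y]
    and [D] the generator of the dynamics turning a C/G into A or T.
    (1) The score of a fixed alignment for [T^DNA] is exactly the [D]-drift of
        its [S]-score; hence [L(S) - L(S - eps T^DNA) <= eps D L(S)] pointwise.
    (2) Since [p_A = p_T], a Stein identity gives [E[D F] = -E[V F]/(p_A+p_T)].
    So a linear drop of [E L_n] under the perturbation forces
    [Cov(V, L_n(S)) <= -K n]; Cauchy--Schwarz with [Var V <= 2 n] (again
    Efron--Stein) yields [Var L_n(S) >= K^2 n / 2]. *)

Lemma Rsum_cons (a : R) (l : list R) : Rsum (a :: l) = a + Rsum l.
Proof. reflexivity. Qed.

Lemma Rsum_app (l1 l2 : list R) : Rsum (l1 ++ l2) = Rsum l1 + Rsum l2.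
Proof. induction l1 as [|a l1 IH]; simpl; [lra | rewrite IH; lra]. Qed.

Lemma Rsum_flat_map {A} (l : list A) (h : A -> list R) :
  Rsum (flat_map h l) = Rsum (map (fun a => Rsum (h a)) l).
Proof. induction l as [|a l IH]; simpl; [reflexivity | rewrite Rsum_app, IH; reflexivity]. Qed.

Lemma Rsum_map_flat_map {A B} (l : list A) (h : A -> list B) (f : B -> R) :
  Rsum (map f (flat_map h l)) = Rsum (map (fun a => Rsum (map f (h a))) l).
Proof. induction l as [|a l IH]; simpl; [reflexivity | rewrite map_app, Rsum_app, IH; reflexivity]. Qed.

Lemma Rsum_map_plus {A} (l : list A) (f g : A -> R) :
  Rsum (map (fun x => f x + g x) l) = Rsum (map f l) + Rsum (map g l).
Proof. induction l as [|a l IH]; simpl; [lra | rewrite IH; lra]. Qed.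

Lemma Rsum_map_minus {A} (l : list A) (f g : A -> R) :
  Rsum (map (fun x => f x - g x) l) = Rsum (map f l) - Rsum (map g l).
Proof. induction l as [|a l IH]; simpl; [lra | rewrite IH; lra]. Qed.

Lemma Rsum_map_scal {A} (l : list A) (a : R) (f : A -> R) :
  Rsum (map (fun x => a * f x) l) = a * Rsum (map f l).
Proof. induction l as [|b l IH]; simpl; [lra | rewrite IH; lra]. Qed.

Lemma Rsum_map_ext_in {A} (l : list A) (f g : A -> R) :
  (forall x, In x l -> f x = g x) -> Rsum (map f l) = Rsum (map g l).
Proof. intro H. f_equal. apply map_ext_in. exact H. Qed.

Lemma Rsum_map_le_in {A} (l : list A) (f g : A -> R) :
  (forall x, In x l -> f x <= g x) -> Rsum (map f l) <= Rsum (map g l).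
Proof.
  induction l as [|a l IH]; simpl; intros H; [lra|].
  pose proof (H a (or_introl eq_refl)). pose proof (IH (fun x h => H x (or_intror h))). lra.
Qed.

Lemma Rsum_map_zero {A} (l : list A) (f : A -> R) :
  (forall x, In x l -> f x = 0) -> Rsum (map f l) = 0.
Proof.
  intros H. rewrite (Rsum_map_ext_in l f (fun _ => 0 * 0)) by (intros; rewrite H; auto; ring).
  rewrite Rsum_map_scal. ring.
Qed.

Lemma Rsum_exchange {A B} (l1 : list A) (l2 : list B) (g : A -> B -> R) :
  Rsum (map (fun a => Rsum (map (fun b => g a b) l2)) l1) =
  Rsum (map (fun b => Rsum (map (fun a => g a b) l1)) l2).
Proof.
  induction l1 as [|a l1 IH]; simpl.
  - symmetry. apply Rsum_map_zero. reflexivity.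
  - rewrite IH, <- Rsum_map_plus. reflexivity.
Qed.

Lemma Rsum_filter {A} (l : list A) (P : A -> bool) (f : A -> R) :
  Rsum (map f (filter P l)) = Rsum (map (fun x => if P x then f x else 0) l).
Proof. induction l as [|a l IH]; simpl; auto. destruct (P a); simpl; rewrite IH; lra. Qed.

Lemma Rsum_nonneg {A} (l : list A) (f : A -> R) :
  (forall x, 0 <= f x) -> 0 <= Rsum (map f l).
Proof. intros H; induction l as [|a l IH]; simpl; [lra|]. pose proof (H a); lra. Qed.

Lemma Rsum_nonneg_le {A} (l : list A) (f : A -> R) (a : A) :
  (forall x, 0 <= f x) -> In a l -> f a <= Rsum (map f l).
Proof.
  intros Hf. induction l as [|b l IH]; simpl; intros Ha; [tauto|].
  pose proof (Rsum_nonneg l f Hf). pose proof (Hf b).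
  destruct Ha as [<- | Ha]; [lra | specialize (IH Ha); lra].
Qed.

Lemma Rsum_indicator_seq (b s n : nat) (h : R) :
  Rsum (map (fun k => if Nat.eqb b k then h else 0) (seq s n)) =
  if andb (Nat.leb s b) (Nat.ltb b (s + n)) then h else 0.
Proof.
  revert s. induction n as [|n IH]; intros s; cbn [seq map]; rewrite ?Rsum_cons, ?IH.
  - destruct (Nat.leb_spec s b), (Nat.ltb_spec b (s + 0)); simpl; try lia; reflexivity.
  - destruct (Nat.eqb_spec b s), (Nat.leb_spec s b), (Nat.ltb_spec b (s + S n)),
      (Nat.leb_spec (S s) b), (Nat.ltb_spec b (S s + n)); simpl; try lia; ring.
Qed.

Lemma Rsum_indicator_in (b s n : nat) (h : R) : (s <= b < s + n)%nat ->
  Rsum (map (fun k => if Nat.eqb b k then h else 0) (seq s n)) = h.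
Proof.
  intros Hb. rewrite Rsum_indicator_seq.
  destruct (Nat.leb_spec s b), (Nat.ltb_spec b (s + n)); simpl; auto; lia.
Qed.

(** [upd k d x] replaces the letter at (0-based) position [k] of [x] by [d];
    it is the identity when [k] is out of range. *)
Fixpoint upd (k : nat) (d : letter) (x : list letter) : list letter :=
  match x, k with
  | [], _ => []
  | _ :: r, O => d :: r
  | c :: r, S k' => c :: upd k' d r
  end.

Lemma length_upd k d x : length (upd k d x) = length x.
Proof. revert k; induction x; intros [|k]; simpl; auto. Qed.

Lemma upd_out k d x : (length x <= k)%nat -> upd k d x = x.
Proof.
  revert k; induction x as [|c x IH]; intros [|k] H; simpl in *; auto; try lia.
  rewrite IH by lia. reflexivity.
Qed.

Lemma at1_upd k d x j : (k < length x)%nat -> (1 <= j)%nat ->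
  at1 (upd k d x) j = if Nat.eqb j (S k) then Some d else at1 x j.
Proof.
  intros Hk Hj. unfold at1.
  assert (Hnth : forall j', nth j' (upd k d x) lA = if Nat.eqb j' k then d else nth j' x lA).
  { clear Hj. revert k Hk. induction x as [|c x IH]; intros k Hk j'; simpl in *; [lia|].
    destruct k, j'; simpl; auto. apply IH. lia. }
  rewrite Hnth. destruct (Nat.eqb_spec (j - 1) k), (Nat.eqb_spec j (S k)); auto; lia.
Qed.

Lemma at1_cons c w k : at1 (c :: w) (S (S k)) = at1 w (S k).
Proof. unfold at1. simpl. rewrite Nat.sub_0_r. reflexivity. Qed.

Lemma words_length n x : In x (words n) -> length x = n.
Proof.
  revert x; induction n as [|n IH]; simpl; intros x H.
  - destruct H as [<- | []]; reflexivity.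
  - apply in_flat_map in H. destruct H as (w & Hw & Hx).
    destruct Hx as [<- | [<- | [<- | [<- | []]]]]; simpl; f_equal; auto.
Qed.

(** * Expectations over random words *)

Section WordExpectation.

Variable p : letter -> R.
Hypothesis p_nonneg : forall c, 0 <= p c.
Hypothesis p_total : p lA + p lT + p lC + p lG = 1.

Definition Ew (n : nat) (g : list letter -> R) : R :=
  Rsum (map (fun x => word_prob p x * g x) (words n)).

Lemma Ew_0 g : Ew 0 g = g [].
Proof. unfold Ew, word_prob. simpl. ring. Qed.

Lemma Ew_S n g : Ew (S n) g = Ew n (fun w =>
  p lA * g (lA :: w) + p lT * g (lT :: w) + p lC * g (lC :: w) + p lG * g (lG :: w)).
Proof.
  unfold Ew. simpl words. rewrite Rsum_map_flat_map. f_equal. apply map_ext. intros w.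
  unfold word_prob. simpl. ring.
Qed.

Lemma Ew_plus n f g : Ew n (fun x => f x + g x) = Ew n f + Ew n g.
Proof. unfold Ew. rewrite <- Rsum_map_plus. f_equal. apply map_ext. intros; ring. Qed.

Lemma Ew_scal n a f : Ew n (fun x => a * f x) = a * Ew n f.
Proof. unfold Ew. rewrite <- Rsum_map_scal. f_equal. apply map_ext. intros; ring. Qed.

Lemma Ew_minus n f g : Ew n (fun x => f x - g x) = Ew n f - Ew n g.
Proof. unfold Ew. rewrite <- Rsum_map_minus. f_equal. apply map_ext. intros; ring. Qed.

Lemma Ew_ext n f g : (forall x, In x (words n) -> f x = g x) -> Ew n f = Ew n g.
Proof. intros H. apply Rsum_map_ext_in. intros x Hx. rewrite H; auto. Qed.

Lemma Ew_zero n : Ew n (fun _ => 0) = 0.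
Proof. apply Rsum_map_zero. intros; ring. Qed.

Lemma Ew_sum {A} n (l : list A) (h : A -> list letter -> R) :
  Ew n (fun x => Rsum (map (fun k => h k x) l)) = Rsum (map (fun k => Ew n (h k)) l).
Proof. induction l as [|a l IH]; simpl; [apply Ew_zero | rewrite Ew_plus, IH; reflexivity]. Qed.

Lemma word_prob_nonneg x : 0 <= word_prob p x.
Proof. unfold word_prob. induction x as [|c x IH]; simpl; [lra | apply Rmult_le_pos; auto]. Qed.

Lemma Ew_mono n f g : (forall x, In x (words n) -> f x <= g x) -> Ew n f <= Ew n g.
Proof.
  intros H. apply Rsum_map_le_in. intros x Hx.
  apply Rmult_le_compat_l; auto using word_prob_nonneg.
Qed.

Lemma Ew_const n a : Ew n (fun _ => a) = a.
Proof.
  induction n as [|n IH]; [apply Ew_0|]. rewrite Ew_S.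
  transitivity (Ew n (fun _ => a)); [|exact IH]. apply Ew_ext. intros. transitivity ((p lA + p lT + p lC + p lG) * a); [ring | rewrite p_total; ring].
Qed.

Lemma Ew_bound n f c : (forall x, In x (words n) -> - c <= f x <= c) -> - c <= Ew n f <= c.
Proof.
  intros H. split.
  - rewrite <- (Ew_const n (- c)). apply Ew_mono. intros x Hx. apply H; auto.
  - rewrite <- (Ew_const n c). apply Ew_mono. intros x Hx. apply H; auto.
Qed.

Lemma Expect_Ew n f : Expect p n f = Ew n (fun x => Ew n (fun y => f x y)).
Proof.
  unfold Expect, Ew. rewrite Rsum_flat_map. f_equal. apply map_ext. intro x.
  rewrite <- Rsum_map_scal. f_equal. apply map_ext. intros; ring.
Qed.

Lemma Expect_ext n f g :
  (forall x y, In x (words n) -> In y (words n) -> f x y = g x y) -> Expect p n f = Expect p n g.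
Proof. intros H. rewrite !Expect_Ew. apply Ew_ext. intros. apply Ew_ext. auto. Qed.

Lemma Expect_plus n f g : Expect p n (fun x y => f x y + g x y) = Expect p n f + Expect p n g.
Proof. rewrite !Expect_Ew, <- Ew_plus. apply Ew_ext. intros. apply Ew_plus. Qed.

Lemma Expect_scal n a f : Expect p n (fun x y => a * f x y) = a * Expect p n f.
Proof. rewrite !Expect_Ew, <- Ew_scal. apply Ew_ext. intros. apply Ew_scal. Qed.

Lemma Expect_minus n f g : Expect p n (fun x y => f x y - g x y) = Expect p n f - Expect p n g.
Proof. rewrite !Expect_Ew, <- Ew_minus. apply Ew_ext. intros. apply Ew_minus. Qed.

Lemma Expect_const n a : Expect p n (fun _ _ => a) = a.
Proof.
  rewrite Expect_Ew. transitivity (Ew n (fun _ => a)); [|apply Ew_const].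
  apply Ew_ext. intros. apply Ew_const.
Qed.

Lemma Expect_mono n f g :
  (forall x y, In x (words n) -> In y (words n) -> f x y <= g x y) -> Expect p n f <= Expect p n g.
Proof. intros H. rewrite !Expect_Ew. apply Ew_mono. intros. apply Ew_mono. auto. Qed.

Lemma Expect_square_nonneg n f : 0 <= Expect p n (fun x y => f x y ^ 2).
Proof. rewrite <- (Expect_const n 0). apply Expect_mono. intros. apply pow2_ge_0. Qed.

(** ** Efron--Stein bound for functions with bounded differences *)

Definition bounded_diff (F : list letter -> R) (c : R) : Prop :=
  forall x i d, - c <= F (upd i d x) - F x <= c.

Lemma letter_variance fA fT fC fG K :
  -K <= fT - fA <= K -> -K <= fC - fA <= K -> -K <= fG - fA <= K ->
  p lA * fA^2 + p lT * fT^2 + p lC * fC^2 + p lG * fG^2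
    - (p lA * fA + p lT * fT + p lC * fC + p lG * fG)^2 <= K^2.
Proof.
  intros HT HC HG. pose proof (p_nonneg lT). pose proof (p_nonneg lC). pose proof (p_nonneg lG).
  assert (E : p lA * fA^2 + p lT * fT^2 + p lC * fC^2 + p lG * fG^2
                - (p lA * fA + p lT * fT + p lC * fC + p lG * fG)^2
     = p lT * (fT-fA)^2 + p lC * (fC-fA)^2 + p lG * (fG-fA)^2
       - (p lT * (fT-fA) + p lC * (fC-fA) + p lG * (fG-fA))^2).
  { replace (p lA) with (1 - p lT - p lC - p lG) by lra. ring. }
  rewrite E.
  assert (p lT * (fT-fA)^2 <= p lT * K^2) by (apply Rmult_le_compat_l; nra).
  assert (p lC * (fC-fA)^2 <= p lC * K^2) by (apply Rmult_le_compat_l; nra).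
  assert (p lG * (fG-fA)^2 <= p lG * K^2) by (apply Rmult_le_compat_l; nra).
  pose proof (pow2_ge_0 (p lT * (fT-fA) + p lC * (fC-fA) + p lG * (fG-fA))).
  pose proof (p_nonneg lA). pose proof (pow2_ge_0 K). nra.
Qed.

(** Efron--Stein for one word: the variance of [F] is at most [m c^2],
    obtained by revealing the letters one at a time. *)
Lemma word_variance m F c : bounded_diff F c ->
  Ew m (fun x => F x ^ 2) - (Ew m F) ^ 2 <= INR m * c ^ 2.
Proof.
  revert F. induction m as [|m IH]; intros F HF.
  - rewrite !Ew_0. simpl. lra.
  - rewrite !Ew_S.
    set (G := fun w => p lA * F (lA :: w) + p lT * F (lT :: w) + p lC * F (lC :: w) + p lG * F (lG :: w)).
    assert (HG : bounded_diff G c).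
    { intros w i d. unfold G.
      pose proof (HF (lA :: w) (S i) d). pose proof (HF (lT :: w) (S i) d).
      pose proof (HF (lC :: w) (S i) d). pose proof (HF (lG :: w) (S i) d). simpl in *.
      pose proof (p_nonneg lA). pose proof (p_nonneg lT).
      pose proof (p_nonneg lC). pose proof (p_nonneg lG). split; nra. }
    set (Q := fun w => p lA * F (lA :: w) ^ 2 + p lT * F (lT :: w) ^ 2
                     + p lC * F (lC :: w) ^ 2 + p lG * F (lG :: w) ^ 2).
    assert (Hfirst : Ew m (fun w => Q w - G w ^ 2) <= c ^ 2).
    { rewrite <- (Ew_const m (c ^ 2)). apply Ew_mono. intros w _. apply letter_variance.
      - exact (HF (lA :: w) 0%nat lT).
      - exact (HF (lA :: w) 0%nat lC).
      - exact (HF (lA :: w) 0%nat lG). }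
    assert (E : Ew m Q = Ew m (fun w => Q w - G w ^ 2) + Ew m (fun w => G w ^ 2)).
    { rewrite <- Ew_plus. apply Ew_ext. intros; ring. }
    pose proof (IH G HG). fold G Q. rewrite E, S_INR. lra.
Qed.

Definition bounded_diff2 (f : list letter -> list letter -> R) (c : R) : Prop :=
  (forall y, bounded_diff (fun x => f x y) c) /\ (forall x, bounded_diff (fun y => f x y) c).

Lemma pair_variance n f c : bounded_diff2 f c ->
  Expect p n (fun x y => f x y ^ 2) - (Expect p n f) ^ 2 <= 2 * INR n * c ^ 2.
Proof.
  intros [Hx Hy]. rewrite !Expect_Ew.
  set (g := fun x => Ew n (fun y => f x y)).
  assert (Hg : bounded_diff g c).
  { intros x i d. unfold g. rewrite <- Ew_minus. apply Ew_bound. intros y _. apply (Hx y). }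
  assert (Hin : Ew n (fun x => Ew n (fun y => f x y ^ 2) - g x ^ 2) <= INR n * c ^ 2).
  { rewrite <- (Ew_const n (INR n * c ^ 2)). apply Ew_mono. intros x _.
    apply (word_variance n (fun y => f x y) c (Hy x)). }
  assert (E : Ew n (fun x => Ew n (fun y => f x y ^ 2)) =
     Ew n (fun x => Ew n (fun y => f x y ^ 2) - g x ^ 2) + Ew n (fun x => g x ^ 2)).
  { rewrite <- Ew_plus. apply Ew_ext. intros; ring. }
  pose proof (word_variance n g c Hg). rewrite E. fold g. lra.
Qed.

Lemma nonneg_quadratic_discriminant a b c :
  0 <= b -> (forall t, 0 <= c + 2 * t * a + t ^ 2 * b) -> a ^ 2 <= b * c.
Proof.
  intros Hb H. destruct (Req_dec b 0) as [-> | Hb0].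
  - destruct (Req_dec a 0) as [-> | Ha]; [lra|].
    pose proof (H (- (c + 1) / (2 * a))) as H1.
    replace (c + 2 * (- (c + 1) / (2 * a)) * a + (- (c + 1) / (2 * a)) ^ 2 * 0) with (-1) in H1
      by (field; auto). lra.
  - pose proof (H (- a / b)) as H1.
    replace (c + 2 * (- a / b) * a + (- a / b) ^ 2 * b) with ((b * c - a ^ 2) / b) in H1 by (field; lra).
    assert (0 <= (b * c - a ^ 2) / b * b) by (apply Rmult_le_pos; lra).
    replace ((b * c - a ^ 2) / b * b) with (b * c - a ^ 2) in * by (field; lra). lra.
Qed.

(** Cauchy--Schwarz for [Expect], via the discriminant of [E[(f + t g)^2]]. *)
Lemma Expect_cauchy_schwarz n f g :
  (Expect p n (fun x y => f x y * g x y)) ^ 2 <=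
  Expect p n (fun x y => g x y ^ 2) * Expect p n (fun x y => f x y ^ 2).
Proof.
  apply nonneg_quadratic_discriminant; [apply Expect_square_nonneg|]. intros t.
  replace (Expect p n (fun x y => f x y ^ 2) + 2 * t * Expect p n (fun x y => f x y * g x y)
           + t ^ 2 * Expect p n (fun x y => g x y ^ 2))
    with (Expect p n (fun x y => (f x y + t * g x y) ^ 2)); [apply Expect_square_nonneg|].
  rewrite <- !Expect_scal, <- !Expect_plus. apply Expect_ext. intros; ring.
Qed.

Lemma Expect_centred_sq n F :
  Expect p n (fun x y => (F x y - Expect p n F) ^ 2) =
  Expect p n (fun x y => F x y ^ 2) - (Expect p n F) ^ 2.
Proof.
  set (m := Expect p n F).
  transitivity (Expect p n (fun x y => F x y ^ 2 + (-2 * m) * F x y + m ^ 2)).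
  - apply Expect_ext. intros; ring.
  - rewrite !Expect_plus, Expect_scal, Expect_const. fold m. ring.
Qed.

Lemma variance_nonneg n F : 0 <= Expect p n (fun x y => F x y ^ 2) - (Expect p n F) ^ 2.
Proof. rewrite <- Expect_centred_sq. apply Expect_square_nonneg. Qed.

(** A centred statistic [V] correlated with [F] forces [F] to fluctuate:
    [Cov(V,F)^2 <= E[V^2] Var(F)]. *)
Lemma covariance_bound n V F : Expect p n V = 0 ->
  (Expect p n (fun x y => V x y * F x y)) ^ 2 <=
  Expect p n (fun x y => V x y ^ 2) * (Expect p n (fun x y => F x y ^ 2) - (Expect p n F) ^ 2).
Proof.
  intros HV. rewrite <- Expect_centred_sq.
  replace (Expect p n (fun x y => V x y * F x y))
    with (Expect p n (fun x y => V x y * (F x y - Expect p n F))).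
  - rewrite Rmult_comm. apply Expect_cauchy_schwarz.
  - transitivity (Expect p n (fun x y => V x y * F x y - Expect p n F * V x y)).
    + apply Expect_ext. intros; ring.
    + rewrite Expect_minus, Expect_scal, HV. ring.
Qed.

End WordExpectation.

(** * Algebra of alignment scores *)

Definition transpose (sc : scoring) : scoring := fun u v => sc v u.

Definition swap_pair (q : nat * nat) : nat * nat := (snd q, fst q).

Lemma align_score_transpose sc x y pi :
  align_score sc x y pi = align_score (transpose sc) y x (map swap_pair pi).
Proof.
  assert (Hfst : map fst (map swap_pair pi) = map snd pi) by (rewrite map_map; reflexivity).
  assert (Hsnd : map snd (map swap_pair pi) = map fst pi) by (rewrite map_map; reflexivity).
  unfold align_score, transpose. rewrite Hfst, Hsnd, map_map. simpl. ring.
Qed.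

Lemma strictly_incr_swap pi : strictly_incr (map swap_pair pi) = strictly_incr pi.
Proof.
  induction pi as [|a l IH]; [reflexivity|]. destruct l as [|b l]; [reflexivity|].
  cbn [map strictly_incr] in *. rewrite IH. cbn [swap_pair fst snd].
  destruct (Nat.ltb (fst a) _), (Nat.ltb (snd a) _); reflexivity.
Qed.

Lemma is_alignment_transpose m m' pi :
  is_alignment m m' pi -> is_alignment m' m (map swap_pair pi).
Proof.
  intros [Hs Hb]. split; [rewrite strictly_incr_swap; exact Hs|].
  apply Forall_map. eapply Forall_impl; [|exact Hb]. simpl. tauto.
Qed.

Lemma align_score_upd sc x y pi k d : (k < length x)%nat ->
  is_alignment (length x) (length y) pi ->
  align_score sc (upd k d x) y pi = align_score sc x y pi
   + Rsum (map (fun q => if Nat.eqb (fst q) (S k)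
                         then sc (Some d) (at1 y (snd q)) - sc (at1 x (S k)) (at1 y (snd q)) else 0) pi)
   + (if existsb (Nat.eqb (S k)) (map fst pi) then 0 else sc (Some d) gap - sc (at1 x (S k)) gap).
Proof.
  intros Hk [_ Hpi]. rewrite Forall_forall in Hpi. unfold align_score. rewrite length_upd.
  set (free := filter _ (seq 1 (length x))).
  assert (Ematch : Rsum (map (fun q => sc (at1 (upd k d x) (fst q)) (at1 y (snd q))) pi) =
     Rsum (map (fun q => sc (at1 x (fst q)) (at1 y (snd q))) pi) +
     Rsum (map (fun q => if Nat.eqb (fst q) (S k)
                         then sc (Some d) (at1 y (snd q)) - sc (at1 x (S k)) (at1 y (snd q)) else 0) pi)).
  { rewrite <- Rsum_map_plus. apply Rsum_map_ext_in. intros q Hq. specialize (Hpi q Hq).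
    rewrite at1_upd by lia. destruct (Nat.eqb_spec (fst q) (S k)) as [-> |]; ring. }
  assert (Egap : Rsum (map (fun j => sc (at1 (upd k d x) j) gap) free) =
     Rsum (map (fun j => sc (at1 x j) gap) free) +
     Rsum (map (fun j => if Nat.eqb (S k) j then sc (Some d) gap - sc (at1 x (S k)) gap else 0) free)).
  { rewrite <- Rsum_map_plus. apply Rsum_map_ext_in. intros j Hj.
    apply filter_In in Hj. destruct Hj as [Hj _]. apply in_seq in Hj.
    rewrite at1_upd by lia. destruct (Nat.eqb_spec j (S k)), (Nat.eqb_spec (S k) j); subst; try lia; ring. }
  assert (Eone : Rsum (map (fun j => if Nat.eqb (S k) j then sc (Some d) gap - sc (at1 x (S k)) gap else 0) free)
     = if existsb (Nat.eqb (S k)) (map fst pi) then 0 else sc (Some d) gap - sc (at1 x (S k)) gap).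
  { unfold free. rewrite Rsum_filter.
    rewrite (Rsum_map_ext_in _ _ (fun j => if Nat.eqb (S k) j then
        (if existsb (Nat.eqb (S k)) (map fst pi) then 0 else sc (Some d) gap - sc (at1 x (S k)) gap) else 0)).
    - apply Rsum_indicator_in. lia.
    - intros j _. destruct (Nat.eqb_spec (S k) j) as [<- |]; [|destruct (negb _); reflexivity].
      destruct (existsb _ _); reflexivity. }
  rewrite Ematch, Egap, Eone. ring.
Qed.

(** In a strictly increasing alignment at most one pair has a given first
    coordinate, so an indicator-weighted sum of terms bounded by [B] is
    bounded by [B]. *)
Lemma sum_over_one_pair pi a (h : nat * nat -> R) B :
  strictly_incr pi = true -> (forall q, - B <= h q <= B) -> 0 <= B ->
  - B <= Rsum (map (fun q => if Nat.eqb (fst q) a then h q else 0) pi) <= B.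
Proof.
  intros Hs Hh HB. induction pi as [|q l IH]; simpl; [lra|].
  assert (Hl : strictly_incr l = true /\ forall r, In r l -> (fst q < fst r)%nat).
  { clear IH. revert q Hs. induction l as [|q' l IHl]; intros q Hs; [split; [reflexivity | intros r []]|].
    simpl in Hs. apply andb_prop in Hs. destruct Hs as [Hqq' Hs].
    apply andb_prop in Hqq'. destruct Hqq' as [H1 _]. apply Nat.ltb_lt in H1.
    destruct (IHl q' Hs) as [_ Hr]. split; [exact Hs|].
    intros r [<- | Hin]; [exact H1 | specialize (Hr r Hin); lia]. }
  destruct Hl as [Hl Hlt]. destruct (Nat.eqb_spec (fst q) a) as [<- |].
  - rewrite Rsum_map_zero; [pose proof (Hh q); lra|].
    intros r Hr. specialize (Hlt r Hr). destruct (Nat.eqb_spec (fst r) (fst q)); [lia | reflexivity].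
  - specialize (IH Hl). lra.
Qed.

Definition gletters : list gletter := [None; Some lA; Some lT; Some lC; Some lG].

Definition score_bound (sc : scoring) : R :=
  Rsum (map (fun uv => Rabs (sc (fst uv) (snd uv))) (list_prod gletters gletters)).

Lemma score_bound_spec sc u v : - score_bound sc <= sc u v <= score_bound sc.
Proof.
  assert (H : Rabs (sc u v) <= score_bound sc).
  { apply (Rsum_nonneg_le _ (fun uv => Rabs (sc (fst uv) (snd uv))) (u, v)); [intros; apply Rabs_pos|].
    apply in_prod_iff. unfold gletters.
    split; [destruct u as [[]|] | destruct v as [[]|]]; simpl; tauto. }
  pose proof (Rle_abs (sc u v)). pose proof (Rle_abs (- sc u v)). rewrite Rabs_Ropp in *. lra.
Qed.

Lemma align_score_diff_x sc M x y pi k d : (forall u v, - M <= sc u v <= M) ->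
  is_alignment (length x) (length y) pi ->
  - (4 * M) <= align_score sc (upd k d x) y pi - align_score sc x y pi <= 4 * M.
Proof.
  intros HM Hpi. assert (HM0 : 0 <= M) by (pose proof (HM gap gap); lra).
  destruct (le_lt_dec (length x) k) as [Hk | Hk]; [rewrite upd_out by exact Hk; lra|].
  rewrite align_score_upd by assumption.
  assert (Hone := sum_over_one_pair pi (S k)
    (fun q => sc (Some d) (at1 y (snd q)) - sc (at1 x (S k)) (at1 y (snd q))) (2 * M) (proj1 Hpi)).
  assert (Hgap : - (2 * M) <= (if existsb (Nat.eqb (S k)) (map fst pi) then 0
                              else sc (Some d) gap - sc (at1 x (S k)) gap) <= 2 * M).
  { destruct (existsb _ _); [lra|]. pose proof (HM (Some d) gap). pose proof (HM (at1 x (S k)) gap). lra. }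
  cut (- (2 * M) <= Rsum (map (fun q => if Nat.eqb (fst q) (S k)
         then sc (Some d) (at1 y (snd q)) - sc (at1 x (S k)) (at1 y (snd q)) else 0) pi) <= 2 * M); [lra|].
  apply Hone; [|lra]. intros q.
  pose proof (HM (Some d) (at1 y (snd q))). pose proof (HM (at1 x (S k)) (at1 y (snd q))). lra.
Qed.

Lemma align_score_diff_y sc M x y pi k d : (forall u v, - M <= sc u v <= M) ->
  is_alignment (length x) (length y) pi ->
  - (4 * M) <= align_score sc x (upd k d y) pi - align_score sc x y pi <= 4 * M.
Proof.
  intros HM Hpi. rewrite !(align_score_transpose sc x).
  apply align_score_diff_x; [intros u v; apply HM|].
  apply is_alignment_transpose. exact Hpi.
Qed.

(** * The C/G-to-A/T drift and the perturbation [T^DNA] *)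

(** [cg_drift n F x] is the generator, applied to [F] at [x], of the dynamics
    that replaces any C or G among the first [n] letters by A or T, each with
    probability 1/2. *)
Definition cg_drift (n : nat) (F : list letter -> R) (x : list letter) : R :=
  Rsum (map (fun k => if isCG (at1 x (S k))
                      then (F (upd k lA x) + F (upd k lT x)) / 2 - F x else 0) (seq 0 n)).

Lemma cg_drift_ext n F G x : (forall z, F z = G z) -> cg_drift n F x = cg_drift n G x.
Proof. intros H. unfold cg_drift. apply Rsum_map_ext_in. intros k _. rewrite !H. reflexivity. Qed.

Lemma cg_drift_mono n F G x : F x = G x -> (forall k d, F (upd k d x) <= G (upd k d x)) ->
  cg_drift n F x <= cg_drift n G x.
Proof.
  intros H0 H. apply Rsum_map_le_in. intros k _. destruct (isCG _); [|lra].
  pose proof (H k lA). pose proof (H k lT). lra.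
Qed.

Lemma align_score_combine s s1 s2 a b x y pi :
  (forall u v, s u v = a * s1 u v + b * s2 u v) ->
  align_score s x y pi = a * align_score s1 x y pi + b * align_score s2 x y pi.
Proof.
  intros H. unfold align_score.
  assert (Hsum : forall {A} (l : list A) (f f1 f2 : A -> R), (forall z, f z = a * f1 z + b * f2 z) ->
            Rsum (map f l) = a * Rsum (map f1 l) + b * Rsum (map f2 l)).
  { intros A l f f1 f2 Hf. rewrite (Rsum_map_ext_in l f (fun z => a * f1 z + b * f2 z)) by auto.
    rewrite Rsum_map_plus, !Rsum_map_scal. reflexivity. }
  rewrite !(Hsum _ _ _ _ _ (fun _ => H _ _)). ring.
Qed.

Lemma cg_drift_column sc x y pi k : (k < length x)%nat -> is_alignment (length x) (length y) pi ->
  (if isCG (at1 x (S k))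
   then (align_score sc (upd k lA x) y pi + align_score sc (upd k lT x) y pi) / 2 - align_score sc x y pi
   else 0) =
  Rsum (map (fun q => if Nat.eqb (fst q) (S k) then T_X sc (at1 x (fst q)) (at1 y (snd q)) else 0) pi)
  + (if existsb (Nat.eqb (S k)) (map fst pi) then 0 else T_X sc (at1 x (S k)) gap).
Proof.
  intros Hk Hpi. unfold T_X. destruct (isCG (at1 x (S k))) eqn:Hc.
  - rewrite !align_score_upd by assumption. symmetry.
    rewrite (Rsum_map_ext_in pi _ (fun q =>
        /2 * (if Nat.eqb (fst q) (S k) then sc (Some lA) (at1 y (snd q)) - sc (at1 x (S k)) (at1 y (snd q)) else 0)
      + /2 * (if Nat.eqb (fst q) (S k) then sc (Some lT) (at1 y (snd q)) - sc (at1 x (S k)) (at1 y (snd q)) else 0))).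
    + rewrite Rsum_map_plus, !Rsum_map_scal. destruct (existsb _ _); field.
    + intros q _. destruct (Nat.eqb_spec (fst q) (S k)) as [-> |]; [rewrite Hc|]; ring.
  - rewrite Rsum_map_zero; [destruct (existsb _ _); ring|].
    intros q _. destruct (Nat.eqb_spec (fst q) (S k)) as [-> |]; [rewrite Hc|]; reflexivity.
Qed.

Lemma Rsum_indicator_succ (a n : nat) (h : R) : (1 <= a <= n)%nat ->
  Rsum (map (fun k => if Nat.eqb a (S k) then h else 0) (seq 0 n)) = h.
Proof.
  intros Ha. transitivity (Rsum (map (fun k => if Nat.eqb (a - 1) k then h else 0) (seq 0 n)));
    [|apply Rsum_indicator_in; lia].
  apply Rsum_map_ext_in. intros k _.
  destruct (Nat.eqb_spec a (S k)), (Nat.eqb_spec (a - 1) k); auto; lia.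
Qed.

Lemma align_score_TX sc x y pi : is_alignment (length x) (length y) pi ->
  align_score (T_X sc) x y pi = cg_drift (length x) (fun x' => align_score sc x' y pi) x.
Proof.
  intros Hpi. unfold cg_drift.
  rewrite (Rsum_map_ext_in _ _ (fun k =>
      Rsum (map (fun q => if Nat.eqb (fst q) (S k) then T_X sc (at1 x (fst q)) (at1 y (snd q)) else 0) pi)
    + (if existsb (Nat.eqb (S k)) (map fst pi) then 0 else T_X sc (at1 x (S k)) gap)))
    by (intros k Hk; apply in_seq in Hk; apply cg_drift_column; [lia | exact Hpi]).
  rewrite Rsum_map_plus, Rsum_exchange. unfold align_score.
  assert (Hcols : Rsum (map (fun q => T_X sc (at1 x (fst q)) (at1 y (snd q))) pi) =
    Rsum (map (fun q => Rsum (map (fun k => if Nat.eqb (fst q) (S k)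
                   then T_X sc (at1 x (fst q)) (at1 y (snd q)) else 0) (seq 0 (length x)))) pi)).
  { apply Rsum_map_ext_in. intros q Hq. destruct Hpi as [_ Hb]. rewrite Forall_forall in Hb.
    specialize (Hb q Hq). symmetry. apply Rsum_indicator_succ. lia. }
  assert (Hgaps : Rsum (map (fun j => T_X sc (at1 x j) gap)
                    (filter (fun j => negb (existsb (Nat.eqb j) (map fst pi))) (seq 1 (length x)))) =
    Rsum (map (fun k => if existsb (Nat.eqb (S k)) (map fst pi) then 0 else T_X sc (at1 x (S k)) gap)
              (seq 0 (length x)))).
  { rewrite Rsum_filter, <- seq_shift, map_map. apply Rsum_map_ext_in. intros k _.
    destruct (existsb _ _); reflexivity. }
  assert (Hnone : Rsum (map (fun j => T_X sc gap (at1 y j))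
                    (filter (fun j => negb (existsb (Nat.eqb j) (map snd pi))) (seq 1 (length y)))) = 0)
    by (apply Rsum_map_zero; reflexivity).
  rewrite Hcols, Hgaps, Hnone. ring.
Qed.

Lemma align_score_TY sc x y pi : is_alignment (length x) (length y) pi ->
  align_score (T_Y sc) x y pi = cg_drift (length y) (fun y' => align_score sc x y' pi) y.
Proof.
  intros Hpi. rewrite align_score_transpose.
  change (transpose (T_Y sc)) with (T_X (transpose sc)).
  rewrite align_score_TX by (apply is_alignment_transpose; exact Hpi).
  apply cg_drift_ext. intros y'. symmetry. apply align_score_transpose.
Qed.

(** * Optimal alignments *)

Definition valid_alignment (m m' : nat) (pi : list (nat * nat)) : Prop :=
  pi = [] \/ In pi (alignments m m').

Lemma sublists_incl {A} (l s : list A) z : In s (sublists l) -> In z s -> In z l.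
Proof.
  revert s. induction l as [|c l IH]; simpl; intros s Hl Hz.
  - destruct Hl as [<- | []]. destruct Hz.
  - apply in_app_or in Hl. destruct Hl as [Hl | Hl].
    + apply in_map_iff in Hl. destruct Hl as (s' & <- & Hs').
      destruct Hz as [-> | Hz]; [left; reflexivity | right; eapply IH; eauto].
    + right. eapply IH; eauto.
Qed.

Lemma valid_is_alignment m m' pi : valid_alignment m m' pi -> is_alignment m m' pi.
Proof.
  intros [-> | H]; [split; [reflexivity | constructor]|].
  unfold alignments in H. apply filter_In in H. destruct H as [Hsub Hs]. split; [exact Hs|].
  apply Forall_forall. intros [a b] Hq. apply (sublists_incl _ _ _ Hsub), in_prod_iff in Hq.
  destruct Hq as [Ha Hb]. apply in_seq in Ha. apply in_seq in Hb. simpl. lia.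
Qed.

Lemma L_S_attained sc x y :
  exists pi, valid_alignment (length x) (length y) pi /\ L_S sc x y = align_score sc x y pi.
Proof.
  unfold L_S, valid_alignment. generalize (alignments (length x) (length y)) as l.
  induction l as [|a l (b & Hb & E)]; simpl; [exists []; auto|].
  rewrite E. destruct (Rle_dec (align_score sc x y a) (align_score sc x y b)).
  - exists b. rewrite Rmax_right by assumption. tauto.
  - exists a. rewrite Rmax_left by lra. tauto.
Qed.

Lemma L_S_ge sc x y pi : valid_alignment (length x) (length y) pi -> align_score sc x y pi <= L_S sc x y.
Proof.
  unfold L_S, valid_alignment. generalize (alignments (length x) (length y)) as l.
  induction l as [|a l IH]; simpl; intros H.
  - destruct H as [-> | []]. lra.
  - destruct H as [H | [<- | H]].
    + eapply Rle_trans; [apply IH; auto | apply Rmax_r].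
    + apply Rmax_l.
    + eapply Rle_trans; [apply IH; auto | apply Rmax_r].
Qed.

Lemma L_S_stable sc x y x' y' c : length x' = length x -> length y' = length y ->
  (forall pi, valid_alignment (length x) (length y) pi ->
     - c <= align_score sc x' y' pi - align_score sc x y pi <= c) ->
  - c <= L_S sc x' y' - L_S sc x y <= c.
Proof.
  intros Hx Hy H.
  destruct (L_S_attained sc x y) as (pi & Hpi & E). destruct (L_S_attained sc x' y') as (pi' & Hpi' & E').
  rewrite Hx, Hy in Hpi'.
  pose proof (L_S_ge sc x y pi' Hpi'). pose proof (H pi' Hpi').
  assert (align_score sc x' y' pi <= L_S sc x' y') by (apply L_S_ge; rewrite Hx, Hy; exact Hpi).
  pose proof (H pi Hpi). lra.
Qed.

Lemma L_S_bounded_diff sc : bounded_diff2 (L_S sc) (4 * score_bound sc).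
Proof.
  split; intros z w i d; apply L_S_stable; rewrite ?length_upd; auto; intros pi Hpi.
  - apply align_score_diff_x; [apply score_bound_spec | apply valid_is_alignment; exact Hpi].
  - apply align_score_diff_y; [apply score_bound_spec | apply valid_is_alignment; exact Hpi].
Qed.

(** Key pointwise inequality: an alignment optimal for [S] is admissible for
    the perturbed score, whose correction is the drift of its score; the drift
    of an optimal score dominates it. *)
Lemma L_S_perturb_le sc eps x y : 0 < eps ->
  L_S sc x y - L_S (perturb sc eps) x y <=
  eps * (cg_drift (length x) (fun x' => L_S sc x' y) x + cg_drift (length y) (fun y' => L_S sc x y') y).
Proof.
  intros Heps. destruct (L_S_attained sc x y) as (pi & Hpi & E).
  pose proof (valid_is_alignment _ _ _ Hpi) as Hal.
  pose proof (L_S_ge (perturb sc eps) x y pi Hpi) as Hle.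
  rewrite (align_score_combine _ sc (T_DNA sc) 1 (- eps)) in Hle by (intros; unfold perturb; ring).
  rewrite (align_score_combine (T_DNA sc) (T_X sc) (T_Y sc) 1 1) in Hle by (intros; unfold T_DNA; ring).
  rewrite align_score_TX, align_score_TY in Hle by exact Hal.
  assert (cg_drift (length x) (fun x' => align_score sc x' y pi) x <= cg_drift (length x) (fun x' => L_S sc x' y) x).
  { apply cg_drift_mono; [symmetry; exact E|]. intros k d. apply L_S_ge. rewrite length_upd. exact Hpi. }
  assert (cg_drift (length y) (fun y' => align_score sc x y' pi) y <= cg_drift (length y) (fun y' => L_S sc x y') y).
  { apply cg_drift_mono; [symmetry; exact E|]. intros k d. apply L_S_ge. rewrite length_upd. exact Hpi. }
  rewrite E. nra.
Qed.

(** * A Stein identity for the drift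

    When [p A = p T], the drift of the letter law towards A/T is compensated by
    the centred number of C/G letters: [E[cg_drift F] = -E[V F]/(p A + p T)]. *)

Section DriftIdentity.

Variable p : letter -> R.
Hypothesis p_nonneg : forall c, 0 <= p c.
Hypothesis p_total : p lA + p lT + p lC + p lG = 1.
Hypothesis p_AT : p lA = p lT.
Hypothesis p_A_pos : 0 < p lA.

Definition cg_indicator (x : list letter) (k : nat) : R := if isCG (at1 x (S k)) then 1 else 0.

Definition cg_excess (n : nat) (x : list letter) : R :=
  Rsum (map (fun k => cg_indicator x k - (p lC + p lG)) (seq 0 n)).

(** The identity at a single position, by induction on the length of the word:
    at the position itself it is the balance [p A = p T]. *)
Lemma Ew_drift_position n F k : (k < n)%nat ->
  Ew p n (fun x => if isCG (at1 x (S k)) then (F (upd k lA x) + F (upd k lT x)) / 2 - F x else 0)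
  = - / (p lA + p lT) * Ew p n (fun x => (cg_indicator x k - (p lC + p lG)) * F x).
Proof.
  revert F k. induction n as [|n IH]; intros F k Hk; [lia|]. rewrite !Ew_S.
  destruct k as [|k].
  - rewrite <- Ew_scal. apply Ew_ext. intros w _. unfold cg_indicator. cbn [upd at1 nth Nat.sub isCG].
    rewrite p_AT. replace (p lG) with (1 - 2 * p lT - p lC) by lra. field. lra.
  - rewrite (Ew_ext p n _ (fun w =>
      p lA * (if isCG (at1 w (S k)) then (F (lA :: upd k lA w) + F (lA :: upd k lT w)) / 2 - F (lA :: w) else 0) +
      p lT * (if isCG (at1 w (S k)) then (F (lT :: upd k lA w) + F (lT :: upd k lT w)) / 2 - F (lT :: w) else 0) +
      p lC * (if isCG (at1 w (S k)) then (F (lC :: upd k lA w) + F (lC :: upd k lT w)) / 2 - F (lC :: w) else 0) +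
      p lG * (if isCG (at1 w (S k)) then (F (lG :: upd k lA w) + F (lG :: upd k lT w)) / 2 - F (lG :: w) else 0)))
      by (intros w _; rewrite !at1_cons; reflexivity).
    rewrite !Ew_plus, !Ew_scal.
    rewrite (IH (fun w => F (lA :: w))), (IH (fun w => F (lT :: w))),
            (IH (fun w => F (lC :: w))), (IH (fun w => F (lG :: w))) by lia.
    assert (Hshift : forall c, Ew p n (fun w => (cg_indicator (c :: w) (S k) - (p lC + p lG)) * F (c :: w))
                             = Ew p n (fun w => (cg_indicator w k - (p lC + p lG)) * F (c :: w)))
      by (intros c; apply Ew_ext; intros w _; unfold cg_indicator; rewrite at1_cons; reflexivity).
    rewrite !Hshift. ring.
Qed.

Lemma Ew_drift n F :
  Ew p n (cg_drift n F) = - / (p lA + p lT) * Ew p n (fun x => cg_excess n x * F x).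
Proof.
  unfold cg_drift, cg_excess.
  rewrite (Ew_sum p n (seq 0 n) (fun k x => if isCG (at1 x (S k))
                                            then (F (upd k lA x) + F (upd k lT x)) / 2 - F x else 0)).
  rewrite (Rsum_map_ext_in _ _ (fun k => - / (p lA + p lT) *
             Ew p n (fun x => (cg_indicator x k - (p lC + p lG)) * F x)))
    by (intros k Hk; apply in_seq in Hk; apply Ew_drift_position; lia).
  rewrite Rsum_map_scal, <- Ew_sum. f_equal. apply Ew_ext. intros x _.
  rewrite Rmult_comm, <- Rsum_map_scal. apply Rsum_map_ext_in. intros; ring.
Qed.

(** The C/G excess is centred: apply the identity to a constant. *)
Lemma Ew_cg_excess n : Ew p n (cg_excess n) = 0.
Proof.
  pose proof (Ew_drift n (fun _ => 1)) as H.
  rewrite (Ew_ext p n _ (fun _ => 0)) in H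
    by (intros x _; unfold cg_drift; apply Rsum_map_zero; intros k _; destruct (isCG _); field).
  rewrite Ew_zero in H.
  assert (Hc : - / (p lA + p lT) <> 0) by (apply Ropp_neq_0_compat, Rinv_neq_0_compat; lra).
  rewrite (Ew_ext p n _ (fun x => cg_excess n x * 1)) by (intros; ring).
  symmetry in H. apply Rmult_integral in H. destruct H; [contradiction | assumption].
Qed.

Lemma cg_excess_bounded_diff n : bounded_diff (cg_excess n) 1.
Proof.
  intros x i d. destruct (le_lt_dec (length x) i) as [Hi | Hi]; [rewrite upd_out by exact Hi; lra|].
  set (h := (if isCG (Some d) then 1 else 0) - cg_indicator x i).
  assert (E : cg_excess n (upd i d x) - cg_excess n x =
              Rsum (map (fun k => if Nat.eqb i k then h else 0) (seq 0 n))).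
  { unfold cg_excess. rewrite <- Rsum_map_minus. apply Rsum_map_ext_in. intros k _.
    unfold cg_indicator at 1. rewrite at1_upd by lia.
    destruct (Nat.eqb_spec (S k) (S i)), (Nat.eqb_spec i k); try lia;
      [subst k; unfold h; ring | unfold cg_indicator; ring]. }
  assert (Hh : -1 <= h <= 1) by (unfold h, cg_indicator; destruct (isCG (Some d)), (isCG (at1 x (S i))); lra).
  rewrite E, Rsum_indicator_seq. destruct (_ && _)%bool; lra.
Qed.

Lemma Ew_cg_drift_comm n m f x :
  Ew p n (fun y => cg_drift m (fun x' => f x' y) x) = cg_drift m (fun x' => Ew p n (f x')) x.
Proof.
  unfold cg_drift. rewrite (Ew_sum p n (seq 0 m) (fun k y => if isCG (at1 x (S k))
      then (f (upd k lA x) y + f (upd k lT x) y) / 2 - f x y else 0)).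
  apply Rsum_map_ext_in. intros k _. destruct (isCG _); [|apply Ew_zero].
  rewrite (Ew_ext p n _ (fun y => / 2 * f (upd k lA x) y + / 2 * f (upd k lT x) y - f x y)) by (intros; field).
  rewrite Ew_minus, Ew_plus, !Ew_scal. field.
Qed.

Definition pair_excess (n : nat) (x y : list letter) : R := cg_excess n x + cg_excess n y.

Lemma Expect_pair_drift n f :
  Expect p n (fun x y => cg_drift n (fun x' => f x' y) x + cg_drift n (fun y' => f x y') y) =
  - / (p lA + p lT) * Expect p n (fun x y => pair_excess n x y * f x y).
Proof.
  unfold pair_excess.
  rewrite Expect_plus, (Expect_ext p n (fun x y => (cg_excess n x + cg_excess n y) * f x y)
    (fun x y => cg_excess n x * f x y + cg_excess n y * f x y)) by (intros; ring).
  rewrite Expect_plus, Rmult_plus_distr_l, !Expect_Ew. f_equal.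
  - rewrite (Ew_ext p n _ (cg_drift n (fun x' => Ew p n (f x')))) by (intros; apply Ew_cg_drift_comm).
    rewrite Ew_drift. f_equal. apply Ew_ext. intros. rewrite Ew_scal. reflexivity.
  - rewrite <- Ew_scal. apply Ew_ext. intros x _. apply Ew_drift.
Qed.

Lemma Expect_pair_excess n : Expect p n (pair_excess n) = 0.
Proof.
  unfold pair_excess. rewrite (Expect_plus p n (fun x _ => cg_excess n x) (fun _ y => cg_excess n y)), !Expect_Ew.
  rewrite (Ew_ext p n (fun x => Ew p n (fun _ => cg_excess n x)) (cg_excess n))
    by (intros; apply Ew_const; assumption).
  rewrite (Ew_ext p n (fun _ => Ew p n (fun y => cg_excess n y)) (fun _ => 0))
    by (intros; apply Ew_cg_excess).
  rewrite Ew_cg_excess, Ew_zero. ring.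
Qed.

(** Efron--Stein: the excess has variance at most [2 n]. *)
Lemma Expect_pair_excess_sq n : Expect p n (fun x y => pair_excess n x y ^ 2) <= 2 * INR n.
Proof.
  assert (Hbd : bounded_diff2 (pair_excess n) 1).
  { split; intros z x i d; unfold pair_excess; pose proof (cg_excess_bounded_diff n x i d); lra. }
  pose proof (pair_variance p p_nonneg p_total n (pair_excess n) 1 Hbd) as H.
  rewrite Expect_pair_excess in H. lra.
Qed.

End DriftIdentity.

(** * Fluctuations of the optimal score *)

Lemma Var_Ln_upper p S n : (forall c, 0 <= p c) -> p lA + p lT + p lC + p lG = 1 ->
  Var_Ln p S n <= 2 * INR n * (4 * score_bound S) ^ 2.
Proof. intros Hnn Htot. exact (pair_variance p Hnn Htot n (L_S S) _ (L_S_bounded_diff S)). Qed.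

(** Averaging the pointwise inequality [L_S_perturb_le] with the Stein
    identity: a drop of the mean score under the perturbation forces a
    negative covariance between [L_S] and the C/G excess. *)
Lemma mean_drop_le_covariance p S eps n : (forall c, 0 <= p c) ->
  p lA + p lT + p lC + p lG = 1 -> p lA = p lT -> 0 < p lA -> 0 < eps ->
  E_Ln p S n - E_Ln p (perturb S eps) n <=
  - (eps / (p lA + p lT)) * Expect p n (fun x y => pair_excess p n x y * L_S S x y).
Proof.
  intros Hnn Htot HAT HA Heps. unfold E_Ln. rewrite <- Expect_minus.
  eapply Rle_trans.
  - apply (Expect_mono p Hnn n _ (fun x y => eps * (cg_drift n (fun x' => L_S S x' y) x
                                                    + cg_drift n (fun y' => L_S S x y') y))).
    intros x y Hx Hy. rewrite <- (words_length n x Hx) at 1. rewrite <- (words_length n y Hy).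
    apply L_S_perturb_le. exact Heps.
  - rewrite Expect_scal, (Expect_pair_drift p Htot HAT HA). right. field. lra.
Qed.

(** The covariance with the C/G excess is controlled by the variance of
    [L_n(S)]: Cauchy--Schwarz, the excess having second moment at most [2 n]. *)
Lemma covariance_excess_sq_le p S n : (forall c, 0 <= p c) ->
  p lA + p lT + p lC + p lG = 1 -> p lA = p lT -> 0 < p lA ->
  (Expect p n (fun x y => pair_excess p n x y * L_S S x y)) ^ 2 <= 2 * INR n * Var_Ln p S n.
Proof.
  intros Hnn Htot HAT HA.
  pose proof (covariance_bound p Hnn Htot n (pair_excess p n) (L_S S)
                (Expect_pair_excess p Htot HAT HA n)) as Hcs.
  change (Var_Ln p S n) with (Expect p n (fun x y => L_S S x y ^ 2) - Expect p n (L_S S) ^ 2).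
  eapply Rle_trans; [exact Hcs|]. apply Rmult_le_compat_r.
  - apply variance_nonneg; assumption.
  - apply Expect_pair_excess_sq; assumption.
Qed.

Lemma mean_gap_eventually p S1 S2 l1 l2 :
  lambda_is p S1 l1 -> lambda_is p S2 l2 -> l2 < l1 ->
  exists N, forall n, (N <= n)%nat -> INR n * ((l1 - l2) / 2) <= E_Ln p S1 n - E_Ln p S2 n.
Proof.
  intros H1 H2 Hlt. destruct (CV_minus _ _ _ _ H1 H2 ((l1 - l2) / 2)) as [N HN]; [lra|].
  exists (max N 1). intros n Hn.
  specialize (HN n ltac:(lia)). unfold R_dist, lambda_n in HN. apply Rabs_def2 in HN.
  assert (Hn1 : 1 <= INR n) by (apply (le_INR 1); lia).
  replace (E_Ln p S1 n - E_Ln p S2 n) with (INR n * (E_Ln p S1 n / INR n - E_Ln p S2 n / INR n))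
    by (field; lra).
  apply Rmult_le_compat_l; lra.
Qed.

Lemma linear_lower_bound a K t v : 0 < K -> 1 <= t -> a <= - (K * t) -> a ^ 2 <= 2 * t * v ->
  K ^ 2 / 2 * t <= v.
Proof.
  intros HK Ht Ha Hav. assert (HKt : 0 <= K * t) by (apply Rmult_le_pos; lra).
  assert (Hsq : (K * t) ^ 2 <= a ^ 2) by nra.
  apply (Rmult_le_reg_l (2 * t)); [lra|]. nra.
Qed.

Theorem mainTheorem11 (p : letter -> R) (S : scoring) :
  p lA = p lT -> p lC = p lG -> 0 < p lA -> 0 < p lC ->
  p lA + p lT + p lC + p lG = 1 ->
  symmetric_scoring S ->
  (exists eps : R, 0 < eps /\
     exists l1 l2 : R, lambda_is p S l1 /\ lambda_is p (perturb S eps) l2 /\ l1 - l2 > 0) ->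
  exists c1 c2 : R, 0 < c1 /\ 0 < c2 /\
    exists N : nat, forall n : nat, (N <= n)%nat ->
      c1 * INR n <= Var_Ln p S n <= c2 * INR n.
Proof.
  intros HAT HCG HA HC Htot _ (eps & Heps & l1 & l2 & H1 & H2 & Hgap).
  assert (Hnn : forall c, 0 <= p c) by (intros []; lra).
  destruct (mean_gap_eventually p S (perturb S eps) l1 l2 H1 H2 ltac:(lra)) as [N HN].
  set (K := (p lA + p lT) * (l1 - l2) / (2 * eps)).
  assert (HK : 0 < K) by (unfold K; apply Rdiv_lt_0_compat; nra).
  exists (K ^ 2 / 2), (2 * (4 * score_bound S) ^ 2 + 1).
  split; [nra|]. split; [pose proof (pow2_ge_0 (4 * score_bound S)); lra|].
  exists (max N 1). intros n Hn. pose proof (pos_INR n). split.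
  - set (a := Expect p n (fun x y => pair_excess p n x y * L_S S x y)).
    assert (Ha : a <= - (K * INR n)).
    { pose proof (HN n ltac:(lia)).
      pose proof (mean_drop_le_covariance p S eps n Hnn Htot HAT HA Heps) as Hdrop. fold a in Hdrop.
      assert (Hc : 0 < eps / (p lA + p lT)) by (apply Rdiv_lt_0_compat; lra).
      apply (Rmult_le_reg_l (eps / (p lA + p lT))); [exact Hc|].
      replace (eps / (p lA + p lT) * - (K * INR n)) with (- (INR n * ((l1 - l2) / 2))) by (unfold K; field; lra).
      lra. }
    apply (linear_lower_bound a K); [exact HK | apply (le_INR 1); lia | exact Ha |].
    apply covariance_excess_sq_le; assumption.
  - pose proof (Var_Ln_upper p S n Hnn Htot). pose proof (pow2_ge_0 (4 * score_bound S)). nra.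
Qed.
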